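(* Let $\gamma<0$, $1\le p<\infty$, and let $L^p_\gamma(\mathbb{R})=L^p(\mathbb{R},(1+e^x)^\gamma dx)$. For every nonnegative $f\in L^p_\gamma(\mathbb{R})$, $$\liminf_{h\to-\infty}\|f+\tau_hf\|_{L^p_\gamma(\mathbb{R})}\ge2^{1/p}\|f\|_{L^p_\gamma(\mathbb{R})},$$ where $\tau_hf(x)=f(x-h)$. *)

From HB Require Import structures.
From mathcomp Require Import all_boot all_order all_algebra.
From mathcomp Require Import all_classical all_reals all_analysis.
Set Implicit Arguments. Unset Strict Implicit. Unset Printing Implicit Defensive.
Import Order.TTheory GRing.Theory Num.Theory.
Import numFieldNormedType.Exports.
Local Open Scope classical_set_scope.
Local Open Scope ring_scope.

Definition wgt {R : realType} (gamma : R) (x : R) : R := (1 + expR x) `^ gamma.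

Definition wLnorm {R : realType} (gamma p : R) (f : R -> R) : \bar R :=
  ((\int[lebesgue_measure]_x ((`|f x| `^ p * wgt gamma x)%:E)) `^ p^-1)%E.

Definition in_wLp {R : realType} (gamma p : R) (f : R -> R) : Prop :=
  measurable_fun [set: R] f /\
  (\int[lebesgue_measure]_x ((`|f x| `^ p * wgt gamma x)%:E) < +oo)%E.

Definition tau {R : realType} (h : R) (f : R -> R) : R -> R := fun x => f (x - h).

From HB Require Import structures.
From mathcomp Require Import all_boot all_order all_algebra.
From mathcomp Require Import all_classical all_reals all_analysis.
From mathcomp Require Import measurable_realfun lra.
Import Order.TTheory GRing.Theory Num.Theory.
Import numFieldNormedType.Exports.
Local Open Scope classical_set_scope.
Local Open Scope ring_scope.

(* Up to a p-th root the norm is \int |f|^p w for the weight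
   w(x) = (1 + e^x)^gamma, which is nonincreasing since gamma < 0. For h <= 0
   the change of variables x |-> x - h turns \int |f|^p w into
   \int |tau_h f|^p w(. - h) <= \int |tau_h f|^p w. Together with
   a^p + b^p <= (a + b)^p for a, b >= 0 and p >= 1 this gives
   2 \int |f|^p w <= \int |f + tau_h f|^p w for every h <= 0. *)

Section lebesgue_translation.
Context {R : realType}.
Local Notation mu := (@lebesgue_measure R).

Lemma measurable_addr (c : R) : measurable_fun [set: R] (+%R^~ c).
Proof. by apply: measurable_funD => //; exact: measurable_cst. Qed.

Lemma lebesgue_measure_addr (c : R) (A : set (measurableTypeR R)) :
  measurable A -> pushforward mu (+%R^~ c : _ -> measurableTypeR R) A = mu A.
Proof.
move=> mA; apply/esym/lebesgue_measure_unique => //=.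
  exact: measurable_addr.
move=> _ _ [[a b] _ <-] /=; rewrite /pushforward.
have -> : (+%R^~ c) @^-1` `]a, b]%classic = `]a - c, b - c]%classic.
  apply/seteqP; split => x /=; rewrite !in_itv /= => /andP[? ?];
    by apply/andP; split; lra.
rewrite !lebesgue_measure_itv /= !lte_fin ltrD2r.
by case: ifP => // _; rewrite -!EFinD opprB addrA subrK.
Qed.

Lemma ge0_integral_addr (c : R) (f : R -> \bar R) :
  measurable_fun [set: R] f -> (forall x, (0 <= f x)%E) ->
  (\int[mu]_x f (x + c)%R = \int[mu]_x f x)%E.
Proof.
move=> mf f0.
rewrite -[in LHS](preimage_setT (+%R^~ c : R -> measurableTypeR R)).
rewrite -ge0_integral_pushforward //; last exact: measurable_addr.
apply: eq_measure_integral => [|mc A mA _]; first exact: measurable_addr.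
exact: lebesgue_measure_addr.
Qed.

Lemma measurable_tau (h : R) (f : R -> R) :
  measurable_fun [set: R] f -> measurable_fun [set: R] (tau h f).
Proof. by move=> mf; exact: measurableT_comp mf (measurable_addr (- h)). Qed.

End lebesgue_translation.

Lemma powR_superadditive {R : realType} (p a b : R) :
  1 <= p -> 0 <= a -> 0 <= b -> a `^ p + b `^ p <= (a + b) `^ p.
Proof.
move=> p1 a0 b0; have p0 : 0 < p := lt_le_trans ltr01 p1.
have ab0 : 0 <= a + b := addr_ge0 a0 b0.
rewrite -(mulr_powRB1 a0 p0) -(mulr_powRB1 b0 p0) -(mulr_powRB1 ab0 p0) mulrDl.
have le_pow x : 0 <= x -> x <= a + b -> x `^ (p - 1) <= (a + b) `^ (p - 1).
  by move=> x0 xab; apply: ge0_ler_powR; rewrite ?subr_ge0 ?nnegrE.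
by apply: lerD; apply: ler_wpM2l => //; apply: le_pow; rewrite ?lerDl ?lerDr.
Qed.

Lemma poweR_le_scaled {R : realType} (c r : R) (x y : \bar R) :
  0 <= c -> 0 <= r -> (0 <= x)%E -> (c%:E * x <= y)%E ->
  ((c `^ r)%:E * x `^ r <= y `^ r)%E.
Proof.
move=> c0 r0 x0 cxy; have cx0 : (0 <= c%:E * x)%E by rewrite mule_ge0.
rewrite -poweR_EFin -poweRM ?lee_fin //.
by apply: gt0_ler_poweR; rewrite // in_itv /= leey andbT // (le_trans cx0).
Qed.

Lemma limf_einf_ge_near {T : choiceType} {X : filteredType T} {R : realType}
    (F : set_system X) (u : X -> \bar R) (a : \bar R) :
  (\forall x \near F, a <= u x)%E -> (a <= limf_einf u F)%E.
Proof.
move=> Fa; rewrite limf_einfE; apply: le_trans (ereal_sup_ubound _); last first.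
  by exists [set x | a <= u x]%E.
by apply/ereal_infP => _ [x ax <-].
Qed.

Section weight.
Context {R : realType} (gamma : R).

Lemma wgt_ge0 x : 0 <= wgt gamma x.
Proof. exact: powR_ge0. Qed.

Lemma measurable_wgt : measurable_fun [set: R] (wgt gamma).
Proof.
apply: (measurableT_comp (measurable_powR gamma)).
by apply: measurable_funD => //; exact: measurable_cst.
Qed.

Lemma wgt_nonincreasing x y :
  gamma <= 0 -> x <= y -> wgt gamma y <= wgt gamma x.
Proof.
move=> g0 xy; have pos z : 0 < 1 + expR z by rewrite addr_gt0 ?expR_gt0.
rewrite /wgt /powR !gt_eqF // ler_expR ler_wnM2l // ler_ln ?posrE //.
by rewrite lerD2l ler_expR.
Qed.

End weight.

Section weighted_integral.
Context {R : realType} (gamma p : R).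
Local Notation mu := (@lebesgue_measure R).

Definition wLint (f : R -> R) : \bar R :=
  (\int[mu]_x (`|f x| `^ p * wgt gamma x)%:E)%E.

Lemma wLnormE (f : R -> R) : wLnorm gamma p f = (wLint f `^ p^-1)%E.
Proof. by []. Qed.

Lemma wLint_integrand_ge0 (f : R -> R) x :
  (0 <= (`|f x| `^ p * wgt gamma x)%:E)%E.
Proof. by rewrite lee_fin mulr_ge0 ?powR_ge0 ?wgt_ge0. Qed.

Lemma wLint_ge0 (f : R -> R) : (0 <= wLint f)%E.
Proof. by apply: integral_ge0 => x _; exact: wLint_integrand_ge0. Qed.

Lemma measurable_wLint_integrand (f : R -> R) : measurable_fun [set: R] f ->
  measurable_fun [set: R] (fun x => (`|f x| `^ p * wgt gamma x)%:E).
Proof.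
move=> mf; apply/measurable_EFinP/measurable_funM; last exact: measurable_wgt.
apply: (measurableT_comp (measurable_powR p)).
by apply: measurableT_comp => //; exact: normr_measurable.
Qed.

Lemma wLint_le_tau (f : R -> R) (h : R) :
  gamma <= 0 -> h <= 0 -> measurable_fun [set: R] f ->
  (wLint f <= wLint (tau h f))%E.
Proof.
move=> g0 h0 mf; have mF := measurable_wLint_integrand _ mf.
rewrite /wLint -(ge0_integral_addr (- h) _ mF); last first.
  by move=> x; exact: wLint_integrand_ge0.
apply: ge0_le_integral => //.
- by move=> x _; exact: wLint_integrand_ge0.
- exact: measurableT_comp mF (measurable_addr (- h)).
- by apply: measurable_wLint_integrand; exact: measurable_tau.
move=> x _; rewrite lee_fin /tau ler_wpM2l ?powR_ge0 //.
by apply: wgt_nonincreasing; rewrite ?lerDl ?oppr_ge0.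
Qed.

Lemma wLintD_ge (f g : R -> R) :
  1 <= p -> (forall x, 0 <= f x) -> (forall x, 0 <= g x) ->
  measurable_fun [set: R] f -> measurable_fun [set: R] g ->
  (wLint f + wLint g <= wLint (fun x => (f x + g x)%R))%E.
Proof.
move=> p1 f0 g0 mf mg; rewrite /wLint -ge0_integralD //.
- apply: ge0_le_integral => //.
  + by move=> x _; rewrite adde_ge0 ?wLint_integrand_ge0.
  + exact: emeasurable_funD (measurable_wLint_integrand _ mf)
                            (measurable_wLint_integrand _ mg).
  + exact: measurable_wLint_integrand _ (measurable_funD mf mg).
  move=> x _; rewrite -EFinD lee_fin -mulrDl ler_wpM2r ?wgt_ge0 //.
  by rewrite !ger0_norm ?addr_ge0 // powR_superadditive.
- by move=> x _; exact: wLint_integrand_ge0.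
- exact: measurable_wLint_integrand.
- by move=> x _; exact: wLint_integrand_ge0.
- exact: measurable_wLint_integrand.
Qed.

End weighted_integral.

Theorem lemma8p1 (R : realType) (gamma p : R) (f : R -> R) :
  gamma < 0 -> 1 <= p ->
  (forall x, 0 <= f x) -> in_wLp gamma p f ->
  ((2 `^ p^-1)%:E * wLnorm gamma p f <=
   limf_einf (fun h : R => wLnorm gamma p (fun x => (f x + tau h f x)%R)) (ninfty_nbhs R))%E.
Proof.
move=> g0 p1 f0 [mf _].
have tau_ge0 h x : 0 <= tau h f x by exact: f0.
apply: limf_einf_ge_near; apply: filterS (nbhs_ninfty_le (real0 R)) => h h_le0.
rewrite !wLnormE; apply: poweR_le_scaled => //.
- by rewrite invr_ge0 (le_trans ler01).
- exact: wLint_ge0.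
apply: le_trans (wLintD_ge _ _ _ _ p1 f0 (tau_ge0 h) mf (measurable_tau h f mf)).
by rewrite mule_natl mule2n leeD2l // wLint_le_tau // ltW.
Qed.
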